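(* Under the setting of the context, for every $\boldsymbol{\alpha}\in\mathbb{R}^n$ and $\boldsymbol{\beta}\in\mathbb{R}^{dn}$, the function $$f_{\boldsymbol{\alpha},\boldsymbol{\beta}}=\sum_{i=1}^n\alpha_i k_{\mathbf{x}^i}+\sum_{i=1}^n\sum_{a=1}^d\beta_{ai}[\partial_a k_{\mathbf{x}^i}]$$ satisfies $\widehat{\mathcal{L}}(f_{\boldsymbol{\alpha},\boldsymbol{\beta}})=\mathcal{J}_1(\boldsymbol{\alpha},\boldsymbol{\beta})$, $\widehat{\mathcal{R}}(f_{\boldsymbol{\alpha},\boldsymbol{\beta}})=\mathcal{J}_2(\boldsymbol{\alpha},\boldsymbol{\beta})$ and $\|f_{\boldsymbol{\alpha},\boldsymbol{\beta}}\|_{\mathcal{F}}^2=\mathcal{J}_3(\boldsymbol{\alpha},\boldsymbol{\beta})$, where $$\mathcal{J}_1=\tfrac1n\|\mathbf{y}-\mathbf{K}\boldsymbol{\alpha}-\mathbf{D}^T\boldsymbol{\beta}\|_2^2,\qquad \mathcal{J}_3=\boldsymbol{\alpha}^T\mathbf{K}\boldsymbol{\alpha}+2\boldsymbol{\alpha}^T\mathbf{D}^T\boldsymbol{\beta}+\boldsymbol{\beta}^T\mathbf{L}\boldsymbol{\beta},$$ and $\mathcal{J}_2$ depends on the regularizer: for $\widehat{\mathcal{R}}^L$: $\mathcal{J}_2=\frac1{\sqrt n}\sum_{a=1}^d\|\mathbf{D}^a\boldsymbol{\alpha}+\mathbf{L}^a\boldsymbol{\beta}\|_2$; for $\widehat{\mathcal{R}}^{GL}$: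 $\mathcal{J}_2=\frac1{\sqrt n}\sum_{g=1}^G p_g\|\ddot{\mathbf{D}}^g\boldsymbol{\alpha}+\ddot{\mathbf{L}}^g\boldsymbol{\beta}\|_2$; for $\widehat{\mathcal{R}}^{EN}$: $\mathcal{J}_2=\frac{\mu}{\sqrt n}\sum_{a=1}^d\|\mathbf{D}^a\boldsymbol{\alpha}+\mathbf{L}^a\boldsymbol{\beta}\|_2+\frac{1-\mu}{n}\sum_{a=1}^d\|\mathbf{D}^a\boldsymbol{\alpha}+\mathbf{L}^a\boldsymbol{\beta}\|_2^2$. Consequently the problem $\min_{f\in\mathcal{F}}\widehat{\mathcal{L}}(f)+\tau\widehat{\mathcal{R}}(f)+\nu\|f\|_{\mathcal{F}}^2$ ($\tau,\nu\ge0$) is equivalent to $\min_{\boldsymbol{\alpha},\boldsymbol{\beta}}\mathcal{J}_1+\tau\mathcal{J}_2+\nu\mathcal{J}_3$: both have the same infimum, and $(\boldsymbol{\alpha}^*,\boldsymbol{\beta}^* )$ minimises the latter if and only if $f_{\boldsymbol{\alpha}^*,\boldsymbol{\beta}^*}$ minimises the former.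
   Context: Setting: $\mathcal{X}\subseteq\mathbb{R}^d$ open; $k$ a symmetric positive semidefinite kernel in $C^2(\mathcal{X}\times\mathcal{X})$ with RKHS $\mathcal{F}$; $k_{\mathbf{x}}(\mathbf{x}')=k(\mathbf{x},\mathbf{x}')$; $[\partial_a k_{\mathbf{x}}](\mathbf{x}')=\frac{\partial}{\partial x_a}k(\mathbf{x},\mathbf{x}')$ (derivative in the first argument). These satisfy $\langle k_{\mathbf{x}},f\rangle_{\mathcal{F}}=f(\mathbf{x})$, $[\partial_a k_{\mathbf{x}}]\in\mathcal{F}$, $\langle[\partial_a k_{\mathbf{x}}],f\rangle_{\mathcal{F}}=\partial_a f(\mathbf{x})$. Data $(\mathbf{x}^i,y^i)\in\mathcal{X}\times\mathbb{R}$, $i=1,\dots,n$, $\mathbf{y}=(y^1,\dots,y^n)^T$. Loss and regularizers: $\widehat{\mathcal{L}}(f)=\frac1n\sum_i(y^i-f(\mathbf{x}^i))^2$; $\|\partial_a f\|_{2_n}=\sqrt{\frac1n\sum_i|\partial_a f(\mathbf{x}^i)|^2}$; $\widehat{\mathcal{R}}^L(f)=\sum_a\|\partial_a f\|_{2_n}$; for a partition of $\{1,\dots,d\}$ into groups $g=1,\dots,G$ with $p_g$ elements, $\widehat{\mathcal{R}}^{GL}(f)=\sum_g p_g\sqrt{\sum_{a\in g}\|\partial_af\|_{2_n}^2}$; for $\mu\in[0,1]$, $\widehat{\mathcal{R}}^{EN}(f)=\mu\sum_a\|\partial_af\|_{2_n}+(1-\mu)\sum_a\|\partial_af\|_{2_n}^2$.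 Matrices: $\boldsymbol{\alpha}=(\alpha_1,\dots,\alpha_n)^T$; $\boldsymbol{\beta}=(\beta_{11},\dots,\beta_{1n},\beta_{21},\dots,\beta_{dn})^T$. $\mathbf{K}\in\mathbb{R}^{n\times n}$, $K_{ij}=k(\mathbf{x}^i,\mathbf{x}^j)$. $\mathbf{D}^a\in\mathbb{R}^{n\times n}$, $D^a_{ij}=[\partial_a k_{\mathbf{x}^i}](\mathbf{x}^j)$. $\mathbf{L}^{ab}\in\mathbb{R}^{n\times n}$, $L^{ab}_{ij}=\frac{\partial^2}{\partial s_a\partial r_b}k(\mathbf{s},\mathbf{r})\big|_{\mathbf{s}=\mathbf{x}^i,\mathbf{r}=\mathbf{x}^j}$. $\mathbf{D}\in\mathbb{R}^{dn\times n}$ is the vertical stack of $\mathbf{D}^1,\dots,\mathbf{D}^d$; $\mathbf{L}^a=[\mathbf{L}^{a1}\cdots\mathbf{L}^{ad}]\in\mathbb{R}^{n\times dn}$; $\mathbf{L}\in\mathbb{R}^{dn\times dn}$ is the vertical stack of $\mathbf{L}^1,\dots,\mathbf{L}^d$. For a group $g=\{g_1,\dots,g_{p_g}\}$, $\ddot{\mathbf{D}}^g$ is the vertical stack of $\mathbf{D}^{g_1},\dots,\mathbf{D}^{g_{p_g}}$ and $\ddot{\mathbf{L}}^g$ the vertical stack of $\mathbf{L}^{g_1},\dots,\mathbf{L}^{g_{p_g}}$. *)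

From Stdlib Require Import Reals Lra ClassicalEpsilon.
Set Implicit Arguments.
Open Scope R_scope.

(** Points of R^d are represented as [nat -> R]; a point "of R^d" is one whose
    coordinates of index >= d vanish.  Coordinates and indices are 0-based. *)
Definition pt := nat -> R.

Fixpoint sumR (m : nat) (f : nat -> R) : R :=
  match m with O => 0 | S m' => sumR m' f + f m' end.

Definition in_Rd (d : nat) (x : pt) : Prop := forall j, (d <= j)%nat -> x j = 0.
Definition dist (d : nat) (x y : pt) : R := sumR d (fun j => Rabs (x j - y j)).

Definition open_in_Rd (d : nat) (X : pt -> Prop) : Prop :=
  forall x, X x -> in_Rd d x /\
    exists eps, 0 < eps /\ forall z, in_Rd d z -> dist d x z < eps -> X z.

Definition upd (x : pt) (a : nat) (t : R) : pt :=
  fun j => if Nat.eqb j a then t else x j.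
Definition pd (g : pt -> R) (a : nat) (x : pt) (l : R) : Prop :=
  derivable_pt_lim (fun t => g (upd x a t)) (x a) l.
(** The value of the partial derivative (meaningful when it exists). *)
Definition pderiv (g : pt -> R) (a : nat) (x : pt) : R :=
  epsilon (inhabits 0) (fun l => pd g a x l).

Definition symmetric_on (X : pt -> Prop) (k : pt -> pt -> R) : Prop :=
  forall s r, X s -> X r -> k s r = k r s.
Definition psd_on (X : pt -> Prop) (k : pt -> pt -> R) : Prop :=
  forall (m : nat) (c : nat -> R) (z : nat -> pt),
    (forall i, (i < m)%nat -> X (z i)) ->
    0 <= sumR m (fun i => sumR m (fun j => c i * c j * k (z i) (z j))).
Definition cont2_on (d : nat) (X : pt -> Prop) (h : pt -> pt -> R) : Prop :=
  forall s r, X s -> X r -> forall eps, 0 < eps -> exists del, 0 < del /\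
    forall s' r', X s' -> X r' -> dist d s s' < del -> dist d r r' < del ->
      Rabs (h s' r' - h s r) < eps.
(** A direction (false, a) = d/ds_a (first argument), (true, b) = d/dr_b (second). *)
Definition pd2 (h : pt -> pt -> R) (v : bool * nat) (s r : pt) (l : R) : Prop :=
  if fst v then pd (fun r' => h s r') (snd v) r l
  else pd (fun s' => h s' r) (snd v) s l.
Definition der2 (h : pt -> pt -> R) (v : bool * nat) : pt -> pt -> R :=
  fun s r => if fst v then pderiv (fun r' => h s r') (snd v) r
             else pderiv (fun s' => h s' r) (snd v) s.
Definition C1_on (d : nat) (X : pt -> Prop) (h : pt -> pt -> R) : Prop :=
  cont2_on d X h /\
  forall v, (snd v < d)%nat ->
    (forall s r, X s -> X r -> exists l, pd2 h v s r l) /\ cont2_on d X (der2 h v).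
Definition C2_on (d : nat) (X : pt -> Prop) (h : pt -> pt -> R) : Prop :=
  C1_on d X h /\ forall v, (snd v < d)%nat -> C1_on d X (der2 h v).

(** The RKHS F of k: a real Hilbert space of functions on X (elements [f],
    viewed as functions via [fn f], restricted to X), with the reproducing
    property and the derivative reproducing property stated in the context. *)
Record RKHS (d : nat) (X : pt -> Prop) (k : pt -> pt -> R) : Type := {
  elt : Type;
  hzero : elt;
  hadd : elt -> elt -> elt;
  hscal : R -> elt -> elt;
  inner : elt -> elt -> R;
  fn : elt -> pt -> R;
  kx : pt -> elt;
  dkx : nat -> pt -> elt;
  fn_zero : forall z, X z -> fn hzero z = 0;
  fn_add : forall f g z, X z -> fn (hadd f g) z = fn f z + fn g z;
  fn_scal : forall c f z, X z -> fn (hscal c f) z = c * fn f z;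
  fn_ext : forall f g, (forall z, X z -> fn f z = fn g z) -> f = g;
  inner_sym : forall f g, inner f g = inner g f;
  inner_add : forall f g h, inner (hadd f g) h = inner f h + inner g h;
  inner_scal : forall c f g, inner (hscal c f) g = c * inner f g;
  inner_pos : forall f, 0 <= inner f f;
  inner_def : forall f, inner f f = 0 -> f = hzero;
  complete : forall s : nat -> elt,
    (forall eps, 0 < eps -> exists N, forall p q, (N <= p)%nat -> (N <= q)%nat ->
       inner (hadd (s p) (hscal (-1) (s q))) (hadd (s p) (hscal (-1) (s q))) < eps) ->
    exists l, forall eps, 0 < eps -> exists N, forall p, (N <= p)%nat ->
       inner (hadd (s p) (hscal (-1) l)) (hadd (s p) (hscal (-1) l)) < eps;
  kx_fn : forall x z, X x -> X z -> fn (kx x) z = k x z;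
  kx_repr : forall x f, X x -> inner (kx x) f = fn f x;
  dkx_fn : forall a x z, (a < d)%nat -> X x -> X z ->
    fn (dkx a x) z = pderiv (fun s => k s z) a x;
  dkx_repr : forall a x f, (a < d)%nat -> X x -> pd (fn f) a x (inner (dkx a x) f)
}.

Fixpoint hsum d X k (Hs : RKHS d X k) (m : nat) (g : nat -> elt Hs) : elt Hs :=
  match m with O => hzero Hs | S m' => hadd Hs (hsum Hs m' g) (g m') end.

Definition f_ab d X k (Hs : RKHS d X k) (n : nat) (x : nat -> pt)
  (al : nat -> R) (be : nat -> nat -> R) : elt Hs :=
  hadd Hs (hsum Hs n (fun i => hscal Hs (al i) (kx Hs (x i))))
          (hsum Hs n (fun i => hsum Hs d (fun a => hscal Hs (be a i) (dkx Hs a (x i))))).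

Definition loss d X k (Hs : RKHS d X k) (n : nat) (x : nat -> pt) (y : nat -> R)
  (f : elt Hs) : R :=
  / INR n * sumR n (fun i => (y i - fn Hs f (x i)) ^ 2).
Definition dnorm d X k (Hs : RKHS d X k) (n : nat) (x : nat -> pt) (a : nat)
  (f : elt Hs) : R :=
  sqrt (/ INR n * sumR n (fun i => (pderiv (fn Hs f) a (x i)) ^ 2)).

(** Regularizers: Lasso, group Lasso (partition of {0..d-1} given by the group
    index map grp into G groups), elastic net with parameter mu. *)
Inductive regularizer : Type :=
| Lasso
| GroupLasso (G : nat) (grp : nat -> nat)
| ElasticNet (mu : R).

Definition psize (d : nat) (grp : nat -> nat) (g : nat) : R :=
  sumR d (fun a => if Nat.eqb (grp a) g then 1 else 0).

Definition valid_reg (d : nat) (r : regularizer) : Prop :=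
  match r with
  | Lasso => True
  | GroupLasso G grp => (forall a, (a < d)%nat -> (grp a < G)%nat) /\
                        (forall g, (g < G)%nat -> exists a, (a < d)%nat /\ grp a = g)
  | ElasticNet mu => 0 <= mu <= 1
  end.

Definition Rhat d X k (Hs : RKHS d X k) (n : nat) (x : nat -> pt)
  (r : regularizer) (f : elt Hs) : R :=
  match r with
  | Lasso => sumR d (fun a => dnorm Hs n x a f)
  | GroupLasso G grp =>
      sumR G (fun g => psize d grp g *
        sqrt (sumR d (fun a => if Nat.eqb (grp a) g then (dnorm Hs n x a f) ^ 2 else 0)))
  | ElasticNet mu =>
      mu * sumR d (fun a => dnorm Hs n x a f) + (1 - mu) * sumR d (fun a => (dnorm Hs n x a f) ^ 2)
  end.

(** Matrices (0-based indices; beta_{ai} is [be a i]). *)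
Definition Kmat (k : pt -> pt -> R) (x : nat -> pt) (i j : nat) : R := k (x i) (x j).
Definition Dmat (k : pt -> pt -> R) (x : nat -> pt) (a i j : nat) : R :=
  pderiv (fun s => k s (x j)) a (x i).
Definition Lmat (k : pt -> pt -> R) (x : nat -> pt) (a b i j : nat) : R :=
  pderiv (fun s => pderiv (fun r => k s r) b (x j)) a (x i).

Definition norm2 (n : nat) (v : nat -> R) : R := sqrt (sumR n (fun i => v i ^ 2)).
Definition Kal (n : nat) k x (al : nat -> R) (i : nat) : R :=
  sumR n (fun j => Kmat k x i j * al j).
Definition DTbe (d n : nat) k x (be : nat -> nat -> R) (j : nat) : R :=
  sumR d (fun a => sumR n (fun i => Dmat k x a i j * be a i)).
Definition Lbe (d n : nat) k x (be : nat -> nat -> R) (a i : nat) : R :=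
  sumR d (fun b => sumR n (fun j => Lmat k x a b i j * be b j)).
Definition DLv (d n : nat) k x (al : nat -> R) (be : nat -> nat -> R) (a i : nat) : R :=
  sumR n (fun j => Dmat k x a i j * al j) + Lbe d n k x be a i.

Definition J1 (d n : nat) k x (y : nat -> R) al be : R :=
  / INR n * (norm2 n (fun i => y i - Kal n k x al i - DTbe d n k x be i)) ^ 2.
Definition J3 (d n : nat) k x al be : R :=
  sumR n (fun i => al i * Kal n k x al i)
  + 2 * sumR n (fun i => al i * DTbe d n k x be i)
  + sumR d (fun a => sumR n (fun i => be a i * Lbe d n k x be a i)).
Definition J2 (d n : nat) k x (r : regularizer) al be : R :=
  match r with
  | Lasso => / sqrt (INR n) * sumR d (fun a => norm2 n (DLv d n k x al be a))
  | GroupLasso G grp =>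
      / sqrt (INR n) * sumR G (fun g => psize d grp g *
        (* Euclidean norm of the stacked vector (ddot D^g alpha + ddot L^g beta) *)
        sqrt (sumR d (fun a => if Nat.eqb (grp a) g
                               then sumR n (fun i => DLv d n k x al be a i ^ 2) else 0)))
  | ElasticNet mu =>
      mu / sqrt (INR n) * sumR d (fun a => norm2 n (DLv d n k x al be a))
      + (1 - mu) / INR n * sumR d (fun a => (norm2 n (DLv d n k x al be a)) ^ 2)
  end.

Definition is_inf (E : R -> Prop) (m : R) : Prop :=
  (forall z, E z -> m <= z) /\ (forall b, (forall z, E z -> b <= z) -> b <= m).

From Pilot Require Import Defs.
From Stdlib Require Import Reals Lra Lia ClassicalEpsilon.
Open Scope R_scope.

(* Every value f(x^i) and every partial derivative d_a f(x^i) is the inner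
   product of f with one of the n(d+1) representers k_{x^i}, [d_a k_{x^i}].
   On f_{alpha,beta} these inner products are the entries of K alpha + D^T beta
   and D^a alpha + L^a beta, which yields J1, J2 and J3; identifying
   <[d_a k_{x^i}], [d_b k_{x^j}]> with L^{ab}_{ij} uses the symmetry of k.
   Conversely, the orthogonal projection of any f onto the span of the
   representers is some f_{alpha,beta}; it has the same loss and regularizer
   and no larger norm, so both problems have the same values and minimisers. *)

Lemma sumR_ext m f g : (forall i, (i < m)%nat -> f i = g i) -> sumR m f = sumR m g.
Proof.
  induction m as [|m IH]; simpl; intros H; [reflexivity|].
  rewrite IH by (intros; apply H; lia). now rewrite (H m) by lia.
Qed.

Lemma sumR_add m f g : sumR m (fun i => f i + g i) = sumR m f + sumR m g.
Proof. induction m as [|m IH]; simpl; [lra|]. rewrite IH; lra. Qed.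

Lemma sumR_scal m c f : sumR m (fun i => c * f i) = c * sumR m f.
Proof. induction m as [|m IH]; simpl; [lra|]. rewrite IH; lra. Qed.

Lemma sumR_zero m : sumR m (fun _ => 0) = 0.
Proof. induction m as [|m IH]; simpl; [lra|]. rewrite IH; lra. Qed.

Lemma sumR_swap m p F :
  sumR m (fun i => sumR p (fun j => F i j)) = sumR p (fun j => sumR m (fun i => F i j)).
Proof.
  induction m as [|m IH]; simpl; [now rewrite sumR_zero|].
  now rewrite IH, <- sumR_add.
Qed.

Lemma sumR_nonneg m f : (forall i, (i < m)%nat -> 0 <= f i) -> 0 <= sumR m f.
Proof.
  induction m as [|m IH]; simpl; intros H; [lra|].
  assert (0 <= f m) by (apply H; lia).
  assert (0 <= sumR m f) by (apply IH; intros; apply H; lia).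
  lra.
Qed.

Lemma sumR_sq_nonneg m f : 0 <= sumR m (fun i => f i ^ 2).
Proof. apply sumR_nonneg; intros; apply pow2_ge_0. Qed.

Lemma sumR_split p q f : sumR (p + q) f = sumR p f + sumR q (fun t => f (p + t)%nat).
Proof.
  induction q as [|q IH]; simpl; [rewrite Nat.add_0_r; lra|].
  rewrite Nat.add_succ_r; simpl; rewrite IH; lra.
Qed.

Lemma sumR_blocks d n G :
  sumR (d * n) G = sumR d (fun a => sumR n (fun i => G (a * n + i)%nat)).
Proof. induction d as [|d IH]; simpl; [reflexivity|]. now rewrite Nat.add_comm, sumR_split, IH. Qed.

Lemma sumR_delta d a c : (a < d)%nat -> sumR d (fun j => if Nat.eqb j a then c else 0) = c.
Proof.
  induction d as [|d IH]; intros Ha; [lia|]. simpl.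
  destruct (Nat.eq_dec a d) as [->|Hne].
  - rewrite Nat.eqb_refl, (sumR_ext d _ (fun _ => 0)), sumR_zero; [lra|].
    intros i Hi; destruct (Nat.eqb_spec i d); [lia|reflexivity].
  - rewrite IH by lia. destruct (Nat.eqb_spec d a); [lia|lra].
Qed.

Lemma is_inf_exists (E : R -> Prop) lb :
  (exists z, E z) -> (forall z, E z -> lb <= z) -> exists m, is_inf E m.
Proof.
  intros [z0 Hz0] Hlb.
  destruct (completeness (fun z => E (- z))) as [M [HM1 HM2]].
  - exists (- lb); intros z Hz; apply Hlb in Hz; lra.
  - exists (- z0); now rewrite Ropp_involutive.
  - exists (- M); split.
    + intros z Hz. assert (- z <= M) by (apply HM1; now rewrite Ropp_involutive). lra.
    + intros b Hb. assert (M <= - b) by (apply HM2; intros z Hz; apply Hb in Hz; lra). lra.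
Qed.

Section Reparametrization.

Variables (A P Q : Type) (F : A -> R) (J : P -> Q -> R) (emb : P -> Q -> A).
Hypothesis F_emb : forall p q, F (emb p q) = J p q.
Hypothesis J_le_F : forall a, exists p q, J p q <= F a.

Lemma argmin_reparam p q :
  (forall p' q', J p q <= J p' q') <-> (forall a, F (emb p q) <= F a).
Proof.
  rewrite F_emb; split.
  - intros Hmin a. destruct (J_le_F a) as [p' [q' Hle]].
    apply Rle_trans with (J p' q'); auto.
  - intros Hmin p' q'. rewrite <- (F_emb p' q'). apply Hmin.
Qed.

Variables (lb : R) (p0 : P) (q0 : Q).
Hypothesis F_ge : forall a, lb <= F a.

Lemma inf_reparam :
  exists m, is_inf (fun z => exists a, z = F a) m
         /\ is_inf (fun z => exists p q, z = J p q) m.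
Proof.
  destruct (is_inf_exists (fun z => exists p q, z = J p q) lb) as [m [Hlow Hgreat]].
  - exists (J p0 q0); eauto.
  - intros z [p [q ->]]. rewrite <- F_emb. apply F_ge.
  - exists m; split; [split|split; assumption].
    + intros z [a ->]. destruct (J_le_F a) as [p [q Hle]].
      apply Rle_trans with (J p q); auto. apply Hlow; eauto.
    + intros b Hb. apply Hgreat. intros z [p [q ->]].
      apply Hb. exists (emb p q). now rewrite F_emb.
Qed.

End Reparametrization.

Lemma pderiv_eq g a x l : pd g a x l -> pderiv g a x = l.
Proof.
  intros H. unfold pderiv. eapply uniqueness_limite; [|exact H].
  apply (epsilon_spec (inhabits 0) (fun l => pd g a x l)). eauto.
Qed.

Lemma pd_eq_near g h a x l :
  pd g a x l ->
  (exists del, 0 < del /\ forall t, Rabs (t - x a) < del -> g (upd x a t) = h (upd x a t)) ->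
  pd h a x l.
Proof.
  unfold pd, derivable_pt_lim. intros H [del [Hdel Heq]] eps Heps.
  destruct (H eps Heps) as [delta Hd].
  assert (Hm : 0 < Rmin delta del) by (apply Rmin_pos; [apply cond_pos|exact Hdel]).
  exists (mkposreal _ Hm). intros h0 Hh0 Hh. simpl in Hh.
  assert (E1 : Rabs (x a + h0 - x a) < del).
  { replace (x a + h0 - x a) with h0 by ring.
    apply Rlt_le_trans with (1 := Hh), Rmin_r. }
  assert (E2 : Rabs (x a - x a) < del) by (rewrite Rminus_diag, Rabs_R0; exact Hdel).
  rewrite <- (Heq _ E1), <- (Heq _ E2).
  apply Hd; [exact Hh0|]. apply Rlt_le_trans with (1 := Hh), Rmin_l.
Qed.

Lemma open_in_Rd_upd d (X : pt -> Prop) x a :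
  open_in_Rd d X -> X x -> (a < d)%nat ->
  exists del, 0 < del /\ forall t, Rabs (t - x a) < del -> X (upd x a t).
Proof.
  intros HX Hx Ha. destruct (HX x Hx) as [Hin [eps [He Hz]]].
  exists eps; split; [exact He|]. intros t Ht. apply Hz.
  - intros j Hj. unfold upd. destruct (Nat.eqb_spec j a); [lia|]. now apply Hin.
  - unfold Defs.dist.
    rewrite (sumR_ext d _ (fun j => if Nat.eqb j a then Rabs (t - x a) else 0)).
    { now rewrite sumR_delta. }
    intros j Hj. unfold upd. destruct (Nat.eqb_spec j a) as [->|].
    + now rewrite Rabs_minus_sym.
    + now rewrite Rminus_diag, Rabs_R0.
Qed.

Lemma pderiv_swap_args d (X : pt -> Prop) k z s b :
  open_in_Rd d X -> symmetric_on X k -> C2_on d X k ->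
  X z -> X s -> (b < d)%nat ->
  pderiv (fun s' => k s' z) b s = pderiv (fun r => k z r) b s.
Proof.
  intros hX hsym [[_ hC1] _] Hz Hs Hb.
  destruct (proj1 (hC1 (false, b) Hb) s z Hs Hz) as [l Hl]. unfold pd2 in Hl; simpl in Hl.
  rewrite (pderiv_eq _ _ _ _ Hl). symmetry. apply pderiv_eq. apply (pd_eq_near _ _ _ _ _ Hl).
  destruct (open_in_Rd_upd _ _ _ _ hX Hs Hb) as [del [Hdel Hnear]].
  exists del; split; [exact Hdel|]. intros t Ht. apply hsym; auto.
Qed.

Section FiniteSpan.

Context {d : nat} {X : pt -> Prop} {k : pt -> pt -> R} (Hs : RKHS d X k).

Definition comb (m : nat) (c : nat -> R) (v : nat -> elt Hs) : elt Hs :=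
  hsum Hs m (fun j => hscal Hs (c j) (v j)).

Lemma inner_hzero_l u : inner Hs (hzero Hs) u = 0.
Proof.
  assert (E : hzero Hs = hscal Hs 0 (hzero Hs)).
  { apply fn_ext. intros z Hz. rewrite fn_scal, fn_zero by exact Hz. ring. }
  rewrite E, inner_scal; ring.
Qed.

Lemma inner_add_r u f g : inner Hs u (hadd Hs f g) = inner Hs u f + inner Hs u g.
Proof. now rewrite inner_sym, inner_add, !(inner_sym Hs _ u). Qed.

Lemma inner_scal_r u c f : inner Hs u (hscal Hs c f) = c * inner Hs u f.
Proof. now rewrite inner_sym, inner_scal, inner_sym. Qed.

Lemma inner_hsum_l m g u : inner Hs (hsum Hs m g) u = sumR m (fun j => inner Hs (g j) u).
Proof.
  induction m as [|m IH]; simpl; [apply inner_hzero_l|].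
  now rewrite inner_add, IH.
Qed.

Lemma inner_comb_l m c v u :
  inner Hs (comb m c v) u = sumR m (fun j => c j * inner Hs (v j) u).
Proof. unfold comb. rewrite inner_hsum_l. apply sumR_ext. intros; apply inner_scal. Qed.

Lemma inner_comb_l_congr m c v g h :
  (forall l, (l < m)%nat -> inner Hs (v l) g = inner Hs (v l) h) ->
  inner Hs (comb m c v) g = inner Hs (comb m c v) h.
Proof. intros H. rewrite !inner_comb_l. apply sumR_ext. intros j Hj. now rewrite H. Qed.

(* Solvability of the normal equations: induction on m, correcting the
   projection of f by a multiple of the part w of [v m] orthogonal to the
   first m vectors. *)
Lemma normal_equations m v f :
  exists c, forall l, (l < m)%nat -> inner Hs (v l) (comb m c v) = inner Hs (v l) f.
Proof.
  revert f; induction m as [|m IH]; intros f.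
  { exists (fun _ => 0); intros; lia. }
  destruct (IH f) as [c Hc], (IH (v m)) as [e He].
  set (w := hadd Hs (v m) (hscal Hs (-1) (comb m e v))).
  assert (w_inner : forall u, inner Hs w u = inner Hs (v m) u - inner Hs (comb m e v) u).
  { intros u. unfold w. rewrite inner_add, inner_scal. ring. }
  assert (w_orth : forall l, (l < m)%nat -> inner Hs (v l) w = 0).
  { intros l Hl. rewrite inner_sym, w_inner, (inner_sym Hs (comb m e v)), He by exact Hl.
    rewrite inner_sym; ring. }
  assert (comb_orth : forall a, inner Hs (comb m a v) w = 0).
  { intros a. rewrite (inner_comb_l_congr m a v w (hzero Hs)), inner_sym, inner_hzero_l;
      [reflexivity|].
    intros l Hl. now rewrite w_orth, inner_sym, inner_hzero_l. }
  set (r := if Req_EM_T (inner Hs w w) 0 then 0 else inner Hs w f / inner Hs w w).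
  assert (r_spec : r * inner Hs w w = inner Hs w f).
  { unfold r. destruct (Req_EM_T (inner Hs w w) 0) as [E|E].
    - rewrite (inner_def Hs w E), !inner_hzero_l. ring.
    - field. exact E. }
  set (c' := fun j => if Nat.ltb j m then c j - r * e j else r).
  assert (comb_step : forall u,
             inner Hs (comb (S m) c' v) u = inner Hs (comb m c v) u + r * inner Hs w u).
  { intros u. rewrite inner_comb_l, w_inner, !inner_comb_l. simpl.
    unfold c' at 2. rewrite Nat.ltb_irrefl.
    rewrite (sumR_ext m _ (fun j => c j * inner Hs (v j) u + - r * (e j * inner Hs (v j) u))).
    - rewrite sumR_add, sumR_scal. ring.
    - intros j Hj. unfold c'. apply Nat.ltb_lt in Hj. rewrite Hj. ring. }
  exists c'. intros l Hl. rewrite inner_sym, comb_step.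
  destruct (Nat.eq_dec l m) as [->|Hne].
  - pose proof (w_inner w) as Hww. pose proof (w_inner (comb m c v)) as Hwc.
    pose proof (w_inner f) as Hwf.
    rewrite (inner_sym Hs w (comb m c v)), !comb_orth, (inner_sym Hs (v m) w) in *.
    rewrite (inner_comb_l_congr m e v (comb m c v) f Hc) in Hwc.
    rewrite (inner_sym Hs (comb m c v)).
    replace (inner Hs w (v m)) with (inner Hs w w) by lra. lra.
  - assert (Hlm : (l < m)%nat) by lia.
    rewrite inner_sym, Hc, (inner_sym Hs w), w_orth by exact Hlm. ring.
Qed.

Lemma span_projection m v f :
  exists c, (forall l, (l < m)%nat -> inner Hs (v l) (comb m c v) = inner Hs (v l) f)
         /\ inner Hs (comb m c v) (comb m c v) <= inner Hs f f.
Proof.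
  destruct (normal_equations m v f) as [c Hc]. exists c; split; [exact Hc|].
  assert (Hgg : inner Hs (comb m c v) (comb m c v) = inner Hs (comb m c v) f)
    by (apply inner_comb_l_congr; exact Hc).
  pose proof (inner_pos Hs (hadd Hs f (hscal Hs (-1) (comb m c v)))) as P.
  rewrite inner_add, inner_scal, !inner_add_r, !inner_scal_r,
    (inner_sym Hs f (comb m c v)) in P.
  lra.
Qed.

End FiniteSpan.

Section FeatureExpansion.

Context {d : nat} {X : pt -> Prop} {k : pt -> pt -> R} (Hs : RKHS d X k).
Hypotheses (hX : open_in_Rd d X) (hsym : symmetric_on X k) (hC2 : C2_on d X k).

Lemma inner_kx_kx xi xj : X xi -> X xj -> inner Hs (kx Hs xi) (kx Hs xj) = k xj xi.
Proof. intros. rewrite kx_repr, kx_fn; auto. Qed.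

Lemma inner_kx_dkx a xi xj : (a < d)%nat -> X xi -> X xj ->
  inner Hs (kx Hs xi) (dkx Hs a xj) = pderiv (fun s => k s xi) a xj.
Proof. intros. rewrite kx_repr, dkx_fn; auto. Qed.

Lemma pderiv_fn a z f : (a < d)%nat -> X z ->
  pderiv (fn Hs f) a z = inner Hs (dkx Hs a z) f.
Proof. intros. apply pderiv_eq, dkx_repr; auto. Qed.

Lemma inner_dkx_dkx a b xi xj : (a < d)%nat -> (b < d)%nat -> X xi -> X xj ->
  inner Hs (dkx Hs a xi) (dkx Hs b xj) = pderiv (fun s => pderiv (fun r => k s r) b xj) a xi.
Proof.
  intros Ha Hb Hi Hj. symmetry. apply pderiv_eq.
  apply (pd_eq_near _ _ _ _ _ (dkx_repr Hs xi (dkx Hs b xj) Ha Hi)).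
  destruct (open_in_Rd_upd _ _ _ _ hX Hi Ha) as [del [Hdel Hnear]].
  exists del; split; [exact Hdel|]. intros t Ht.
  rewrite dkx_fn by auto. apply (pderiv_swap_args d X); auto.
Qed.

Variables (n : nat) (x : nat -> pt).
Hypothesis hx : forall i, (i < n)%nat -> X (x i).

Lemma inner_f_ab_l al be u :
  inner Hs (f_ab Hs n x al be) u =
  sumR n (fun j => al j * inner Hs (kx Hs (x j)) u)
  + sumR n (fun j => sumR d (fun a => be a j * inner Hs (dkx Hs a (x j)) u)).
Proof.
  unfold f_ab. rewrite inner_add, !inner_hsum_l.
  f_equal; apply sumR_ext; intros; [apply inner_scal|apply (inner_comb_l Hs)].
Qed.

Lemma fn_f_ab al be i : (i < n)%nat ->
  fn Hs (f_ab Hs n x al be) (x i) = Kal n k x al i + DTbe d n k x be i.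
Proof.
  intros Hi. rewrite <- kx_repr, inner_sym, inner_f_ab_l by auto.
  unfold Kal, DTbe, Kmat, Dmat. f_equal.
  - apply sumR_ext. intros j Hj. rewrite inner_kx_kx by auto. ring.
  - rewrite sumR_swap. apply sumR_ext. intros a Ha. apply sumR_ext. intros j Hj.
    rewrite inner_sym, inner_kx_dkx by auto. ring.
Qed.

Lemma pderiv_f_ab al be a i : (a < d)%nat -> (i < n)%nat ->
  pderiv (fn Hs (f_ab Hs n x al be)) a (x i) = DLv d n k x al be a i.
Proof.
  intros Ha Hi. rewrite pderiv_fn, inner_sym, inner_f_ab_l by auto.
  unfold DLv, Lbe, Dmat, Lmat. f_equal.
  - apply sumR_ext. intros j Hj. rewrite inner_kx_dkx by auto. ring.
  - rewrite sumR_swap. apply sumR_ext. intros b Hb. apply sumR_ext. intros j Hj.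
    rewrite inner_sym, inner_dkx_dkx by auto. ring.
Qed.

Lemma inner_f_ab_self al be :
  inner Hs (f_ab Hs n x al be) (f_ab Hs n x al be) = J3 d n k x al be.
Proof.
  rewrite inner_f_ab_l.
  rewrite (sumR_ext n _ (fun j => al j * Kal n k x al j + al j * DTbe d n k x be j)).
  2:{ intros j Hj. rewrite kx_repr, fn_f_ab by auto. ring. }
  rewrite (sumR_ext n
     (fun j => sumR d (fun a => be a j * inner Hs (dkx Hs a (x j)) (f_ab Hs n x al be)))
     (fun j => sumR d (fun a => be a j * sumR n (fun i => Dmat k x a j i * al i)) +
               sumR d (fun a => be a j * Lbe d n k x be a j))).
  2:{ intros j Hj. rewrite <- sumR_add. apply sumR_ext. intros a Ha.
      rewrite <- pderiv_fn, pderiv_f_ab by auto. unfold DLv. ring. }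
  rewrite !sumR_add. unfold J3.
  assert (Hcross : sumR n (fun j => sumR d (fun a => be a j * sumR n (fun i => Dmat k x a j i * al i)))
                   = sumR n (fun i => al i * DTbe d n k x be i)).
  { unfold DTbe.
    transitivity (sumR n (fun j => sumR n (fun i => sumR d (fun a => al i * (Dmat k x a j i * be a j))))).
    { apply sumR_ext. intros j Hj. rewrite sumR_swap.
      apply sumR_ext; intros a Ha. rewrite <- sumR_scal. apply sumR_ext; intros i Hi. ring. }
    rewrite sumR_swap. apply sumR_ext. intros i Hi. rewrite <- sumR_scal, sumR_swap.
    apply sumR_ext; intros a Ha. rewrite <- sumR_scal. apply sumR_ext; intros j Hj. ring. }
  rewrite Hcross, (sumR_swap n d (fun j a => be a j * Lbe d n k x be a j)). ring.
Qed.

Lemma loss_f_ab y al be : loss Hs n x y (f_ab Hs n x al be) = J1 d n k x y al be.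
Proof.
  unfold loss, J1, norm2. rewrite pow2_sqrt by apply sumR_sq_nonneg. f_equal.
  apply sumR_ext. intros i Hi. rewrite fn_f_ab by exact Hi. f_equal. ring.
Qed.

Lemma f_ab_projection f :
  exists al be,
    (forall i, (i < n)%nat ->
       inner Hs (kx Hs (x i)) (f_ab Hs n x al be) = inner Hs (kx Hs (x i)) f)
 /\ (forall a i, (a < d)%nat -> (i < n)%nat ->
       inner Hs (dkx Hs a (x i)) (f_ab Hs n x al be) = inner Hs (dkx Hs a (x i)) f)
 /\ inner Hs (f_ab Hs n x al be) (f_ab Hs n x al be) <= inner Hs f f.
Proof.
  (* The representers, indexed as the n values followed by d blocks of n derivatives. *)
  set (v := fun t => if Nat.ltb t n then kx Hs (x t)
                     else dkx Hs ((t - n) / n) (x ((t - n) mod n))).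
  assert (Hv_val : forall i, (i < n)%nat -> v i = kx Hs (x i)).
  { intros i Hi. unfold v. now destruct (Nat.ltb_spec i n); [|lia]. }
  assert (Hv_der : forall a i, (i < n)%nat -> v (n + (a * n + i))%nat = dkx Hs a (x i)).
  { intros a i Hi. unfold v. destruct (Nat.ltb_spec (n + (a * n + i)) n); [lia|].
    replace (n + (a * n + i) - n)%nat with (n * a + i)%nat by lia.
    now rewrite <- (Nat.div_unique (n * a + i) n a i), <- (Nat.mod_unique (n * a + i) n a i). }
  destruct (span_projection Hs (n + d * n) v f) as [c [Hc Hnorm]].
  set (be := fun a i => c (n + (a * n + i))%nat).
  assert (Hsame : forall u, inner Hs (f_ab Hs n x c be) u = inner Hs (comb Hs (n + d * n) c v) u).
  { intros u. rewrite inner_f_ab_l, inner_comb_l, sumR_split, sumR_blocks, sumR_swap. f_equal.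
    - apply sumR_ext. intros i Hi. now rewrite Hv_val.
    - apply sumR_ext. intros a Ha. apply sumR_ext. intros i Hi. now rewrite Hv_der. }
  assert (Hsame_r : forall u, inner Hs u (f_ab Hs n x c be) = inner Hs u (comb Hs (n + d * n) c v))
    by (intros u; rewrite !(inner_sym Hs u); apply Hsame).
  exists c, be. split; [|split].
  - intros i Hi. rewrite Hsame_r, <- Hv_val by exact Hi. apply Hc. lia.
  - intros a i Ha Hi. rewrite Hsame_r, <- Hv_der by exact Hi. apply Hc. nia.
  - now rewrite Hsame, Hsame_r.
Qed.

Lemma loss_Rhat_congr y r f g :
  (forall i, (i < n)%nat -> inner Hs (kx Hs (x i)) g = inner Hs (kx Hs (x i)) f) ->
  (forall a i, (a < d)%nat -> (i < n)%nat ->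
     inner Hs (dkx Hs a (x i)) g = inner Hs (dkx Hs a (x i)) f) ->
  loss Hs n x y g = loss Hs n x y f /\ Rhat Hs n x r g = Rhat Hs n x r f.
Proof.
  intros Hval Hder.
  assert (Hd : forall a, (a < d)%nat -> dnorm Hs n x a g = dnorm Hs n x a f).
  { intros a Ha. unfold dnorm. do 2 f_equal. apply sumR_ext. intros i Hi.
    rewrite !pderiv_fn by auto. now rewrite Hder. }
  split.
  - unfold loss. f_equal. apply sumR_ext. intros i Hi.
    rewrite <- !kx_repr by auto. now rewrite Hval.
  - destruct r; unfold Rhat.
    + apply sumR_ext. intros; now apply Hd.
    + apply sumR_ext. intros g0 _. do 2 f_equal. apply sumR_ext. intros a Ha. now rewrite Hd.
    + f_equal; f_equal; apply sumR_ext; intros a Ha; now rewrite Hd.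
Qed.

Hypothesis hn : (0 < n)%nat.

Lemma dnorm_f_ab al be a : (a < d)%nat ->
  dnorm Hs n x a (f_ab Hs n x al be) = / sqrt (INR n) * norm2 n (DLv d n k x al be a).
Proof.
  intros Ha. assert (HN : 0 < / INR n) by (apply Rinv_0_lt_compat, lt_0_INR, hn).
  unfold dnorm, norm2. rewrite sqrt_mult_alt, sqrt_inv by lra. f_equal. f_equal.
  apply sumR_ext. intros i Hi. now rewrite pderiv_f_ab.
Qed.

Lemma dnorm_f_ab_sq al be a : (a < d)%nat ->
  dnorm Hs n x a (f_ab Hs n x al be) ^ 2 = / INR n * sumR n (fun i => DLv d n k x al be a i ^ 2).
Proof.
  intros Ha. assert (HN : 0 < / INR n) by (apply Rinv_0_lt_compat, lt_0_INR, hn).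
  unfold dnorm. rewrite pow2_sqrt.
  - f_equal. apply sumR_ext. intros i Hi. now rewrite pderiv_f_ab.
  - apply Rmult_le_pos; [lra|apply sumR_sq_nonneg].
Qed.

Lemma Rhat_f_ab r al be : Rhat Hs n x r (f_ab Hs n x al be) = J2 d n k x r al be.
Proof.
  assert (HN : 0 < / INR n) by (apply Rinv_0_lt_compat, lt_0_INR, hn).
  destruct r as [|G grp|mu]; unfold Rhat, J2.
  - rewrite <- sumR_scal. apply sumR_ext. intros a Ha. now apply dnorm_f_ab.
  - rewrite <- sumR_scal. apply sumR_ext. intros g Hg.
    rewrite (sumR_ext d _ (fun a => / INR n *
      (if Nat.eqb (grp a) g then sumR n (fun i => DLv d n k x al be a i ^ 2) else 0))).
    + rewrite sumR_scal, sqrt_mult_alt, sqrt_inv by lra. ring.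
    + intros a Ha. destruct (Nat.eqb (grp a) g); [now apply dnorm_f_ab_sq|ring].
  - unfold Rdiv. rewrite !Rmult_assoc, <- !sumR_scal.
    f_equal; apply sumR_ext; intros a Ha.
    + now rewrite dnorm_f_ab.
    + rewrite dnorm_f_ab_sq by exact Ha. unfold norm2.
      now rewrite pow2_sqrt by apply sumR_sq_nonneg.
Qed.

End FeatureExpansion.

Definition rkhs_objective {d : nat} {X : pt -> Prop} {k : pt -> pt -> R} (Hs : RKHS d X k)
  (n : nat) (x : nat -> pt) (y : nat -> R) (r : regularizer) (tau nu : R) (f : elt Hs) : R :=
  loss Hs n x y f + tau * Rhat Hs n x r f + nu * inner Hs f f.

Definition coef_objective (d n : nat) (k : pt -> pt -> R) (x : nat -> pt) (y : nat -> R)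
  (r : regularizer) (tau nu : R) (al : nat -> R) (be : nat -> nat -> R) : R :=
  J1 d n k x y al be + tau * J2 d n k x r al be + nu * J3 d n k x al be.

Lemma rkhs_objective_nonneg {d : nat} {X : pt -> Prop} {k : pt -> pt -> R} (Hs : RKHS d X k)
  n x y r tau nu f :
  (0 < n)%nat -> valid_reg d r -> 0 <= tau -> 0 <= nu ->
  0 <= rkhs_objective Hs n x y r tau nu f.
Proof.
  intros hn hr htau hnu. unfold rkhs_objective.
  assert (HN : 0 < / INR n) by (apply Rinv_0_lt_compat, lt_0_INR, hn).
  assert (Hloss : 0 <= loss Hs n x y f)
    by (apply Rmult_le_pos; [lra|apply sumR_sq_nonneg]).
  assert (Hreg : 0 <= Rhat Hs n x r f).
  { destruct r; unfold Rhat.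
    - apply sumR_nonneg; intros; apply sqrt_pos.
    - apply sumR_nonneg; intros. apply Rmult_le_pos; [|apply sqrt_pos].
      apply sumR_nonneg. intros. destruct (Nat.eqb _ _); lra.
    - simpl in hr. apply Rplus_le_le_0_compat; apply Rmult_le_pos; try lra;
        apply sumR_nonneg; intros; [apply sqrt_pos|apply pow2_ge_0]. }
  pose proof (Rmult_le_pos _ _ htau Hreg). pose proof (Rmult_le_pos _ _ hnu (inner_pos Hs f)).
  lra.
Qed.

Theorem proposition2 (d n : nat) (X : pt -> Prop) (k : pt -> pt -> R)
  (hX : open_in_Rd d X) (hsym : symmetric_on X k) (hpsd : psd_on X k)
  (hC2 : C2_on d X k) (Hs : RKHS d X k)
  (x : nat -> pt) (y : nat -> R) (hn : (0 < n)%nat)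
  (hx : forall i, (i < n)%nat -> X (x i))
  (r : regularizer) (hr : valid_reg d r) :
  (forall (al : nat -> R) (be : nat -> nat -> R),
      loss Hs n x y (f_ab Hs n x al be) = J1 d n k x y al be
   /\ Rhat Hs n x r (f_ab Hs n x al be) = J2 d n k x r al be
   /\ inner Hs (f_ab Hs n x al be) (f_ab Hs n x al be) = J3 d n k x al be)
  /\
  (forall tau nu : R, 0 <= tau -> 0 <= nu ->
     (exists m : R,
        is_inf (fun z => exists f : elt Hs,
                  z = loss Hs n x y f + tau * Rhat Hs n x r f + nu * inner Hs f f) m
     /\ is_inf (fun z => exists (al : nat -> R) (be : nat -> nat -> R),
                  z = J1 d n k x y al be + tau * J2 d n k x r al be + nu * J3 d n k x al be) m)
     /\
     (forall (al : nat -> R) (be : nat -> nat -> R),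
        (forall (al' : nat -> R) (be' : nat -> nat -> R),
           J1 d n k x y al be + tau * J2 d n k x r al be + nu * J3 d n k x al be
           <= J1 d n k x y al' be' + tau * J2 d n k x r al' be' + nu * J3 d n k x al' be')
        <->
        (forall f : elt Hs,
           loss Hs n x y (f_ab Hs n x al be) + tau * Rhat Hs n x r (f_ab Hs n x al be)
             + nu * inner Hs (f_ab Hs n x al be) (f_ab Hs n x al be)
           <= loss Hs n x y f + tau * Rhat Hs n x r f + nu * inner Hs f f))).
Proof.
  assert (Hrepr : forall al be,
      loss Hs n x y (f_ab Hs n x al be) = J1 d n k x y al be
   /\ Rhat Hs n x r (f_ab Hs n x al be) = J2 d n k x r al be
   /\ inner Hs (f_ab Hs n x al be) (f_ab Hs n x al be) = J3 d n k x al be).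
  { intros al be. split; [|split].
    - exact (loss_f_ab Hs n x hx y al be).
    - exact (Rhat_f_ab Hs hX hsym hC2 n x hx hn r al be).
    - exact (inner_f_ab_self Hs hX hsym hC2 n x hx al be). }
  split; [exact Hrepr|]. intros tau nu htau hnu.
  set (F := rkhs_objective Hs n x y r tau nu).
  set (J := coef_objective d n k x y r tau nu).
  assert (F_emb : forall al be, F (f_ab Hs n x al be) = J al be).
  { intros al be. unfold F, J, rkhs_objective, coef_objective.
    destruct (Hrepr al be) as [-> [-> ->]]. reflexivity. }
  assert (J_le_F : forall f, exists al be, J al be <= F f).
  { intros f. destruct (f_ab_projection Hs n x f) as [al [be [Hval [Hder Hnorm]]]].
    exists al, be. rewrite <- F_emb. unfold F, rkhs_objective.
    destruct (loss_Rhat_congr Hs n x hx y r f _ Hval Hder) as [-> ->].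
    pose proof (Rmult_le_compat_l _ _ _ hnu Hnorm). lra. }
  split.
  - exact (inf_reparam _ _ _ F J (f_ab Hs n x) F_emb J_le_F 0 (fun _ => 0) (fun _ _ => 0)
             (fun f => rkhs_objective_nonneg Hs n x y r tau nu f hn hr htau hnu)).
  - exact (argmin_reparam _ _ _ F J (f_ab Hs n x) F_emb J_le_F).
Qed.
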